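(* Let $\mathcal{G}=(\mathcal{V},\mathcal{E},w)$ be a simple connected weighted graph with at least one edge and with $d(v)\ge 1$ for all $v\in\mathcal{V}$. Let $s\in\mathcal{V}$, $\beta\in(0,1)$, and let $x$ solve $Tx=\beta r$ with $T=\beta D+D^{-1}L$ and $r$ the indicator vector of $s$. Then for every proper subset $\mathcal{C}\subsetneq\mathcal{V}$ with $s\in\mathcal{C}$, $$x[\bar{\mathcal{C}}]<\frac{1}{\beta}\,w(\partial(\mathcal{C})).$$
   Context: $d(v)=\sum_{u\sim v}w(u,v)$ is the weighted degree, $D=\operatorname{diag}(d(v))$, $L=D-A$ the combinatorial Laplacian. $r(s)=1$, $r(v)=0$ for $v\ne s$. For $\mathcal{S}\subseteq\mathcal{V}$, $\bar{\mathcal{S}}=\mathcal{V}\setminus\mathcal{S}$, $x[\mathcal{S}]=\sum_{v\in\mathcal{S}}x(v)$, $\partial(\mathcal{S})=\{\{u,v\}\in\mathcal{E}: u\in\mathcal{S},v\in\bar{\mathcal{S}}\}$ and $w(\partial(\mathcal{S}))=\sum_{e\in\partial(\mathcal{S})}w(e)$. *)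

From HB Require Import structures.
From mathcomp Require Import all_boot all_order all_algebra.
Set Implicit Arguments. Unset Strict Implicit. Unset Printing Implicit Defensive.
Import Order.TTheory GRing.Theory Num.Theory.
Local Open Scope ring_scope.

(* A weighted graph on vertex set 'I_n is given by a weight function
   w : 'I_n -> 'I_n -> R; {u,v} is an edge iff 0 < w u v. *)

Definition simple_wgraph (R : realFieldType) (n : nat) (w : 'I_n -> 'I_n -> R) : Prop :=
  (forall u v, w u v = w v u) /\ (forall u v, 0 <= w u v) /\ (forall v, w v v = 0).

Definition wedge (R : realFieldType) (n : nat) (w : 'I_n -> 'I_n -> R) : rel 'I_n :=
  fun u v => 0 < w u v.

Definition wconnected (R : realFieldType) (n : nat) (w : 'I_n -> 'I_n -> R) : Prop :=
  forall u v, connect (wedge w) u v.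

Definition has_edge (R : realFieldType) (n : nat) (w : 'I_n -> 'I_n -> R) : Prop :=
  exists u v, 0 < w u v.

Definition wdeg (R : realFieldType) (n : nat) (w : 'I_n -> 'I_n -> R) (v : 'I_n) : R :=
  \sum_(u | wedge w u v) w u v.

Definition adjmx (R : realFieldType) (n : nat) (w : 'I_n -> 'I_n -> R) : 'M[R]_n :=
  \matrix_(i, j) w i j.

Definition degmx (R : realFieldType) (n : nat) (w : 'I_n -> 'I_n -> R) : 'M[R]_n :=
  diag_mx (\row_i wdeg w i).

Definition lapmx (R : realFieldType) (n : nat) (w : 'I_n -> 'I_n -> R) : 'M[R]_n :=
  degmx w - adjmx w.

Definition Tmx (R : realFieldType) (n : nat) (w : 'I_n -> 'I_n -> R) (beta : R) : 'M[R]_n :=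
  beta *: degmx w + invmx (degmx w) *m lapmx w.

Definition indic (R : realFieldType) (n : nat) (s : 'I_n) : 'cV[R]_n :=
  \col_i (if i == s then 1 else 0).

Definition cut_weight (R : realFieldType) (n : nat) (w : 'I_n -> 'I_n -> R) (C : {set 'I_n}) : R :=
  \sum_(u in C) \sum_(v in ~: C | wedge w u v) w u v.

From HB Require Import structures.
From mathcomp Require Import all_boot all_order all_algebra.
From mathcomp Require Import ring lra.
Import Order.TTheory GRing.Theory Num.Theory.
Local Open Scope ring_scope.

(* Multiplying T x = beta r by D gives, at every vertex v,
     beta d(v) (d(v) x(v) - r(v)) = sum_u w(u,v) (x(u) - x(v)),
   the right-hand side being the flow into v.  A minimum/maximum principle
   for this equation gives 0 <= x < 1.  Summing over the complement of C,
   the flow between two vertices outside C cancels, so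
     beta sum_{v notin C} d(v)^2 x(v) = sum_{u in C, v notin C} w(u,v) (x(u) - x(v)),
   and each term is strictly less than w(u,v) on the (nonempty, by connectivity)
   set of cut edges.  Finally x(v) <= d(v)^2 x(v) since d >= 1. *)

Lemma sum_antisym_eq0 (R : numDomainType) (I : finType) (A : {set I})
    (F : I -> I -> R) :
  (forall u v, F u v = - F v u) -> \sum_(v in A) \sum_(u in A) F u v = 0.
Proof.
move=> F_antisym; apply/eqP; rewrite -[_ == 0](mulrn_eq0 _ 2) mulr2n addr_eq0.
rewrite {1}exchange_big -sumrN; apply/eqP/eq_bigr => v _.
by rewrite -sumrN; apply: eq_bigr => u _.
Qed.

Lemma sumr_filter_gt0 (R : numDomainType) (I : finType) (P : pred I) (F : I -> R) :
  (forall i, 0 <= F i) -> \sum_(i | P i && (0 < F i)) F i = \sum_(i | P i) F i.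
Proof.
move=> F_ge0; rewrite [RHS](bigID (fun i => 0 < F i)) /= [X in _ = _ + X]big1 ?addr0 //.
by move=> i /andP [_]; rewrite lt_def F_ge0 andbT negbK => /eqP.
Qed.

Section WeightedGraph.
Variables (R : realFieldType) (n : nat) (w : 'I_n -> 'I_n -> R).
Hypothesis w_simple : simple_wgraph w.

Let w_sym u v : w u v = w v u. Proof. by case: w_simple. Qed.
Let w_ge0 u v : 0 <= w u v. Proof. by case: w_simple => _ []. Qed.
Let w_loop0 v : w v v = 0. Proof. by case: w_simple => _ []. Qed.

Definition inflow (f : 'I_n -> R) (v : 'I_n) : R :=
  \sum_u w u v * (f u - f v).

Lemma wdegE (v : 'I_n) : wdeg w v = \sum_u w u v.
Proof. by rewrite -(@sumr_filter_gt0 _ _ xpredT (w ^~ v) (w_ge0^~ v)). Qed.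

Lemma cut_weightE (C : {set 'I_n}) :
  cut_weight w C = \sum_(u in C) \sum_(v in ~: C) w u v.
Proof. by apply: eq_bigr => u _; apply: sumr_filter_gt0. Qed.

Lemma inflowE (f : 'I_n -> R) (v : 'I_n) :
  inflow f v = \sum_u w u v * f u - wdeg w v * f v.
Proof.
by rewrite /inflow wdegE mulr_suml -sumrB; apply: eq_bigr => u _; ring.
Qed.

Lemma inflow_le (f : 'I_n -> R) (M : R) (v : 'I_n) :
  (forall u, f u <= M) -> inflow f v <= wdeg w v * (M - f v).
Proof.
move=> f_le; rewrite wdegE mulr_suml; apply: ler_sum => u _.
by rewrite ler_wpM2l // lerD2r.
Qed.

Lemma inflow_ge (f : 'I_n -> R) (m : R) (v : 'I_n) :
  (forall u, m <= f u) -> wdeg w v * (m - f v) <= inflow f v.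
Proof.
move=> f_ge; rewrite wdegE mulr_suml; apply: ler_sum => u _.
by rewrite ler_wpM2l // lerD2r.
Qed.

Lemma lapmx_mulE (x : 'cV[R]_n) (v : 'I_n) :
  (lapmx w *m x) v 0 = - inflow (fun u => x u 0) v.
Proof.
rewrite inflowE /lapmx mulmxBl /degmx mul_diag_mx !mxE.
rewrite opprB; congr (_ - _); apply: eq_bigr => u _.
by rewrite !mxE w_sym.
Qed.

Lemma sum_inflow_setC (f : 'I_n -> R) (C : {set 'I_n}) :
  \sum_(v in ~: C) inflow f v = \sum_(v in ~: C) \sum_(u in C) w u v * (f u - f v).
Proof.
have split_C v : inflow f v = \sum_(u in C) w u v * (f u - f v)
                              + \sum_(u in ~: C) w u v * (f u - f v).
  by rewrite /inflow (bigID (mem C)) /=; congr (_ + _); apply: eq_bigl => u;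
     rewrite in_setC.
under eq_bigr do rewrite split_C.
rewrite big_split /= sum_antisym_eq0 ?addr0 // => u v.
by rewrite w_sym; ring.
Qed.

Lemma wconnected_cut_edge (C : {set 'I_n}) (s : 'I_n) :
  wconnected w -> C \proper [set: 'I_n] -> s \in C ->
  exists u v, [/\ u \in C, v \notin C & 0 < w u v].
Proof.
move=> w_conn /properP [_ [v _ vNC]] sC.
have [|no_cut] := boolP [exists u, exists v, [&& u \in C, v \notin C & wedge w u v]].
  by case/existsP=> u /existsP [v' /and3P [uC v'NC uv']]; exists u, v'.
have edge_in u v' : wedge w u v' -> u \in C -> v' \in C.
  move=> uv' uC; apply: contraNT no_cut => v'NC.
  by apply/existsP; exists u; apply/existsP; exists v'; rewrite uC v'NC.
have C_closed : closed (wedge w) C.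
  by move=> u v' uv'; apply/idP/idP; apply: edge_in; rewrite // /wedge w_sym.
by move: vNC; rewrite -(closed_connect C_closed (w_conn s v)) sC.
Qed.

Lemma sum_inflow_setC_lt_cut (f : 'I_n -> R) (C : {set 'I_n}) (s : 'I_n) :
  wconnected w -> C \proper [set: 'I_n] -> s \in C ->
  (forall v, 0 <= f v) -> (forall v, f v < 1) ->
  \sum_(v in ~: C) inflow f v < cut_weight w C.
Proof.
move=> w_conn C_proper sC f_ge0 f_lt1.
have [u0 [v0 [u0C v0NC w_u0v0]]] := wconnected_cut_edge _ _ w_conn C_proper sC.
have diff_lt1 u v : f u - f v < 1 by have := f_lt1 u; have := f_ge0 v; lra.
have term_le u v : w u v * (f u - f v) <= w u v.
  by rewrite -[leRHS]mulr1 ler_wpM2l // ltW.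
rewrite sum_inflow_setC cut_weightE exchange_big /=.
rewrite [ltLHS](bigD1 u0) // [ltRHS](bigD1 u0) //=.
apply: ltr_leD; last by apply: ler_sum => u _; apply: ler_sum => v _.
rewrite [ltLHS](bigD1 v0) ?inE // [ltRHS](bigD1 v0) ?inE //=.
apply: ltr_leD; last by apply: ler_sum => v _.
by rewrite -[ltRHS]mulr1 ltr_pM2l.
Qed.

(* [lra] and [nra] ignore section hypotheses, hence the [have := beta_gt0] steps. *)
Section Resolvent.
Variables (s : 'I_n) (beta : R) (x : 'cV[R]_n).
Hypothesis wdeg_ge1 : forall v, 1 <= wdeg w v.
Hypothesis beta_gt0 : 0 < beta.
Hypothesis x_sol : Tmx w beta *m x = beta *: indic R s.

Let wdeg_gt0 v : 0 < wdeg w v. Proof. exact: lt_le_trans (wdeg_ge1 v). Qed.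

Lemma degmx_unit : degmx w \in unitmx.
Proof.
rewrite unitmxE det_diag unitfE; apply/prodf_neq0 => v _.
by rewrite mxE gt_eqF.
Qed.

Lemma resolvent_inflowE (v : 'I_n) :
  beta * wdeg w v * (wdeg w v * x v 0 - (v == s)%:R) = inflow (fun u => x u 0) v.
Proof.
have := congr1 (fun M => (degmx w *m M) v 0) x_sol.
rewrite /Tmx mulmxDl mulmxDr !mulmxA mulmxV ?degmx_unit // mul1mx mxE lapmx_mulE.
rewrite -!scalemxAr -scalemxAl -mulmxA /degmx !mul_diag_mx !mxE.
by case: (v == s) => /= sol; lra.
Qed.

Lemma resolvent_ge0 (v : 'I_n) : 0 <= x v 0.
Proof.
have [v0 _ v0_min] := @arg_minP _ _ _ s xpredT (fun u => x u 0) isT.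
apply: le_trans (v0_min v isT).
have := inflow_ge (fun u => x u 0) _ v0 (v0_min ^~ isT).
rewrite subrr mulr0 -resolvent_inflowE pmulr_rge0 ?mulr_gt0 // subr_ge0.
by rewrite -(pmulr_rge0 _ (wdeg_gt0 v0)); apply: le_trans.
Qed.

Lemma resolvent_le1 (v : 'I_n) : x v 0 <= 1.
Proof.
have [v1 _ v1_max] := @arg_maxP _ _ _ s xpredT (fun u => x u 0) isT.
apply: le_trans (v1_max v isT) _.
have := inflow_le (fun u => x u 0) _ v1 (v1_max ^~ isT).
rewrite subrr mulr0 -resolvent_inflowE pmulr_rle0 ?mulr_gt0 // subr_le0.
have ind_le1 : ((v1 == s)%:R : R) <= 1 by case: (_ == _).
by have := wdeg_ge1 v1; have := resolvent_ge0 v1; nra.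
Qed.

Lemma resolvent_off_source (v : 'I_n) : v != s -> (1 + beta) * x v 0 <= 1.
Proof.
move=> vNs; have := inflow_le (fun u => x u 0) _ v resolvent_le1.
rewrite -resolvent_inflowE (negbTE vNs) subr0.
have -> : beta * wdeg w v * (wdeg w v * x v 0) = wdeg w v * (beta * wdeg w v * x v 0).
  by ring.
rewrite ler_pM2l // => bound.
have := mulr_ge0 (ltW beta_gt0) (resolvent_ge0 v); have := wdeg_ge1 v; nra.
Qed.

Lemma resolvent_source_lt1 : x s 0 < 1.
Proof.
set d := wdeg w s; set S := \sum_u w u s * x u 0.
have S_le : (1 + beta) * S <= d.
  rewrite /d wdegE mulr_sumr; apply: ler_sum => u _.
  case: (eqVneq u s) => [->|uNs]; first by rewrite w_loop0 !mul0r mulr0.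
  by rewrite mulrCA -[leRHS]mulr1 ler_wpM2l ?resolvent_off_source.
have := resolvent_inflowE s; rewrite inflowE eqxx -/d -/S => sol.
have S_eq : S = beta * d * (d * x s 0 - 1) + d * x s 0 by rewrite sol; ring.
have x_ge0 := resolvent_ge0 s; have d_gt0 : 0 < d := wdeg_gt0 s.
have beta_ge0 := ltW beta_gt0; have opb_ge0 : 0 <= 1 + beta by lra.
have : d * ((1 + beta) * (1 + beta * d) * x s 0) <= d * (1 + beta + beta ^+ 2).
  have -> : d * ((1 + beta) * (1 + beta * d) * x s 0) =
            (1 + beta) * S + d * (beta * (1 + beta)) by rewrite S_eq; ring.
  lra.
rewrite ler_pM2l // => bound.
have d_excess : 0 <= (1 + beta) * beta * (d - 1) * x s 0.
  by rewrite !mulr_ge0 // subr_ge0; apply: wdeg_ge1.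
have opb2_gt0 : 0 < (1 + beta) ^+ 2 by rewrite exprn_gt0 //; lra.
by rewrite -(ltr_pM2l opb2_gt0) mulr1; have := beta_gt0; lra.
Qed.

Lemma resolvent_lt1 (v : 'I_n) : x v 0 < 1.
Proof.
case: (eqVneq v s) => [->|vNs]; first exact: resolvent_source_lt1.
by have := resolvent_off_source v vNs; have := resolvent_ge0 v; have := beta_gt0; nra.
Qed.

Lemma resolvent_sum_setC_le (C : {set 'I_n}) : s \in C ->
  beta * \sum_(v in ~: C) x v 0 <= \sum_(v in ~: C) inflow (fun u => x u 0) v.
Proof.
move=> sC; rewrite mulr_sumr; apply: ler_sum => v vNC.
have vNs : v != s by apply: contraTneq vNC => ->; rewrite inE sC.
rewrite -resolvent_inflowE (negbTE vNs) subr0 -mulrA ler_pM2l //.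
have := mulr_ge0 (ltW (wdeg_gt0 v)) (resolvent_ge0 v).
have := wdeg_ge1 v; have := resolvent_ge0 v; nra.
Qed.

Lemma resolvent_sum_setC_lt_cut (C : {set 'I_n}) :
  wconnected w -> C \proper [set: 'I_n] -> s \in C ->
  \sum_(v in ~: C) x v 0 < beta^-1 * cut_weight w C.
Proof.
move=> w_conn C_proper sC; rewrite ltr_pdivlMl //.
apply: le_lt_trans (resolvent_sum_setC_le C sC) _.
exact: sum_inflow_setC_lt_cut _ _ _ w_conn C_proper sC resolvent_ge0 resolvent_lt1.
Qed.

End Resolvent.
End WeightedGraph.

Arguments resolvent_sum_setC_lt_cut {R n w} w_simple {s beta x} wdeg_ge1 beta_gt0 x_sol {C}.

Theorem mainTheorem5 (R : realFieldType) (n : nat) (w : 'I_n -> 'I_n -> R)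
  (s : 'I_n) (beta : R) (x : 'cV[R]_n) (C : {set 'I_n}) :
  simple_wgraph w -> wconnected w -> has_edge w ->
  (forall v, 1 <= wdeg w v) ->
  0 < beta < 1 ->
  Tmx w beta *m x = beta *: indic R s ->
  C \proper [set: 'I_n] -> s \in C ->
  \sum_(v in ~: C) x v 0 < beta^-1 * cut_weight w C.
Proof.
move=> w_simple w_conn _ wdeg_ge1 /andP [beta_gt0 _] x_sol C_proper sC.
exact (resolvent_sum_setC_lt_cut w_simple wdeg_ge1 beta_gt0 x_sol w_conn C_proper sC).
Qed.
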